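(* Let $(G,R)$ be a multirooted graph, let $c$ be a healthy partial colouring, and let $c'$ be a partial colouring extending $c$ such that $\mathrm{dom}(c')\setminus\mathrm{dom}(c)$ is finite and contains no symptoms of $c'$. Then $c'$ is healthy.
   Context: All graphs are simple, connected and locally finite. A multirooted graph $(G,R)$ is a graph $G=(V,E)$ together with a set $R\subseteq V$ of roots. A partial colouring is a function $c$ from a set $\mathrm{dom}(c)\subseteq V$ to a set of colours (containing a distinguished colour $0$); $c'$ extends $c$ if $\mathrm{dom}(c)\subseteq\mathrm{dom}(c')$ and $c'$ agrees with $c$ on $\mathrm{dom}(c)$. For $v\in\mathrm{dom}(c)$, the monochromatic component of $v$ is the set of vertices reachable from $v$ by a path all of whose vertices are coloured (in $\mathrm{dom}(c)$) with the colour $c(v)$. A monochromatic component $K$ is healthy if at least one of the following holds: (i) the vertices of $K$ do not have colour $0$; (ii) $K\cap R\neq\emptyset$; (iii) $K$ is finite and $K$ has no uncoloured neighbours; (iv) some vertex of $K$ has at least $4$ neighbours in $K$. Otherwise $K$ is unhealthy. A colouring is healthy if all its monochromatic components are healthy. A symptom of $c$ is either a vertex lying in an unhealthy monochromatic component that has an uncoloured neighbour outside $R$, or an unhealthy infinite monochromatic component. A colouring is healthy iff it has no symptoms. *)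

(* graphs may be infinite, so we work with an arbitrary vertex
   type V and a Prop-valued adjacency relation. *)
From Stdlib Require Import List Arith.
Import ListNotations.

Section Graphs.
Variable V : Type.

Inductive reach (adj : V -> V -> Prop) : V -> V -> Prop :=
| reach_refl v : reach adj v v
| reach_step v w x : reach adj v w -> adj w x -> reach adj v x.

Definition finite_set (P : V -> Prop) : Prop :=
  exists l : list V, forall x, P x -> In x l.

Definition is_graph (adj : V -> V -> Prop) : Prop :=
  (forall u v, adj u v -> adj v u) /\
  (forall v, ~ adj v v) /\
  (forall u v, reach adj u v) /\
  (forall v, finite_set (adj v)).

Variable C : Type.
Variable c0 : C.

Definition colouring := V -> option C.

Definition dom (c : colouring) (v : V) : Prop := c v <> None.

Definition extends (c c' : colouring) : Prop :=
  forall v k, c v = Some k -> c' v = Some k.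

Variable adj : V -> V -> Prop.
Variable R : V -> Prop.

Inductive mono_reach (c : colouring) (k : C) (v : V) : V -> Prop :=
| mono_refl : c v = Some k -> mono_reach c k v v
| mono_step w x : mono_reach c k v w -> adj w x -> c x = Some k ->
                  mono_reach c k v x.

Definition mono_comp (c : colouring) (v : V) : V -> Prop :=
  fun w => exists k, c v = Some k /\ mono_reach c k v w.

Definition healthy_comp (c : colouring) (v : V) : Prop :=
  let K := mono_comp c v in
  (c v <> Some c0) \/
  (exists r, R r /\ K r) \/
  (finite_set K /\ ~ (exists w u, K w /\ adj w u /\ c u = None)) \/
  (exists w, K w /\ exists l : list V,
      NoDup l /\ 4 <= length l /\ forall u, In u l -> adj w u /\ K u).

Definition healthy (c : colouring) : Prop :=
  forall v, dom c v -> healthy_comp c v.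

Definition vertex_symptom (c : colouring) (v : V) : Prop :=
  dom c v /\ ~ healthy_comp c v /\ ~ R v /\
  exists u, adj v u /\ c u = None.

Definition component_symptom (c : colouring) (K : V -> Prop) : Prop :=
  exists v, dom c v /\ (forall w, K w <-> mono_comp c v w) /\
    ~ healthy_comp c v /\ ~ finite_set K.

End Graphs.

(* A monochromatic component K of c' either meets dom(c) or consists of new vertices only.
   In the first case K contains the c-component K0 of some vertex, and the reason K0 is healthy
   persists in c': colours and roots are kept, degrees only grow, and a finite component of c
   with no uncoloured neighbour cannot grow at all, so K = K0.  In the second case K is finite;
   if it were unhealthy, some vertex of K would have an uncoloured neighbour, and that vertex
   (not a root, since K is unhealthy) would be a symptom of c' among the new vertices. *)

From Stdlib Require Import List Arith Classical.

Section MonochromaticComponents.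
Variables (V C : Type) (adj : V -> V -> Prop).
Hypothesis adj_sym : forall u v, adj u v -> adj v u.

Lemma mono_reach_coloured (c : colouring V C) k v w :
  mono_reach V C adj c k v w -> c v = Some k /\ c w = Some k.
Proof. induction 1; intuition. Qed.

Lemma mono_reach_trans (c : colouring V C) k u v w :
  mono_reach V C adj c k u v -> mono_reach V C adj c k v w -> mono_reach V C adj c k u w.
Proof. intros Huv Hvw; induction Hvw; eauto using mono_step. Qed.

Lemma mono_reach_sym (c : colouring V C) k v w :
  mono_reach V C adj c k v w -> mono_reach V C adj c k w v.
Proof.
  induction 1 as [Hv | w x Hvw IH Hwx Hx]; [now constructor|].
  apply mono_reach_trans with w; auto.
  apply mono_step with x; auto using mono_refl.
  apply (mono_reach_coloured _ _ _ _ Hvw).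
Qed.

Lemma mono_reach_extends (c c' : colouring V C) k v w :
  extends V C c c' -> mono_reach V C adj c k v w -> mono_reach V C adj c' k v w.
Proof. intros Hext; induction 1; eauto using mono_refl, mono_step. Qed.

Lemma mono_comp_iff (c : colouring V C) k v w :
  c v = Some k -> mono_comp V C adj c v w <-> mono_reach V C adj c k v w.
Proof.
  intros Hv; split; [intros [k' [Hv' Hvw]] | intros Hvw; now exists k].
  rewrite Hv in Hv'; injection Hv' as <-; exact Hvw.
Qed.

Lemma mono_comp_dom (c : colouring V C) v w :
  mono_comp V C adj c v w -> dom V C c w.
Proof.
  intros [k [_ Hvw]]; unfold dom.
  now rewrite (proj2 (mono_reach_coloured _ _ _ _ Hvw)).
Qed.

Lemma mono_comp_sym (c : colouring V C) v w :
  mono_comp V C adj c v w -> mono_comp V C adj c w v.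
Proof.
  intros [k [_ Hvw]]; exists k; split.
  - apply (mono_reach_coloured _ _ _ _ Hvw).
  - now apply mono_reach_sym.
Qed.

Lemma mono_comp_same (c : colouring V C) v w :
  mono_comp V C adj c v w ->
  c w = c v /\ forall x, mono_comp V C adj c w x <-> mono_comp V C adj c v x.
Proof.
  intros [k [Hv Hvw]].
  assert (Hw : c w = Some k) by apply (mono_reach_coloured _ _ _ _ Hvw).
  split; [congruence|]; intros x.
  rewrite (mono_comp_iff _ _ _ x Hv), (mono_comp_iff _ _ _ x Hw).
  split; intros H; eapply mono_reach_trans; eauto using mono_reach_sym.
Qed.

Lemma mono_comp_extends (c c' : colouring V C) v w :
  extends V C c c' -> mono_comp V C adj c v w -> mono_comp V C adj c' v w.
Proof. intros Hext [k [Hv Hvw]]; exists k; eauto using mono_reach_extends. Qed.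

Lemma mono_reach_extends_closed (c c' : colouring V C) k v w :
  extends V C c c' -> c v = Some k ->
  ~ (exists x u, mono_comp V C adj c v x /\ adj x u /\ c u = None) ->
  mono_reach V C adj c' k v w -> mono_reach V C adj c k v w.
Proof.
  intros Hext Hv Hclosed; induction 1 as [_ | w x _ IH Hwx Hx]; [now constructor|].
  destruct (c x) as [kx|] eqn:Ecx.
  - rewrite (Hext _ _ Ecx) in Hx; injection Hx as ->.
    now apply mono_step with w.
  - destruct Hclosed; exists w, x; split; [exists k; auto | auto].
Qed.

Variables (c0 : C) (R : V -> Prop).

Lemma healthy_comp_same (c : colouring V C) v w :
  c v = c w -> (forall x, mono_comp V C adj c v x <-> mono_comp V C adj c w x) ->
  healthy_comp V C c0 adj R c v -> healthy_comp V C c0 adj R c w.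
Proof.
  intros Hc HK; unfold healthy_comp; rewrite <- Hc.
  intros [Hcol | [[r [Hr Hrv]] | [[[l Hl] Hnb] | [x [Hx [l [Hnd [Hlen Hl]]]]]]]].
  - now left.
  - right; left; exists r; split; [|apply HK]; auto.
  - right; right; left; split.
    + exists l; intros y Hy; apply Hl, HK, Hy.
    + intros [y [u [Hy Hyu]]]; apply Hnb; exists y, u; rewrite HK; auto.
  - right; right; right; exists x; split; [now apply HK|].
    exists l; repeat split; auto; [apply Hl; auto | apply HK, Hl; auto].
Qed.

Lemma healthy_comp_mono_comp (c : colouring V C) v w :
  mono_comp V C adj c v w ->
  healthy_comp V C c0 adj R c v -> healthy_comp V C c0 adj R c w.
Proof.
  intros Hvw; destruct (mono_comp_same c v w Hvw) as [Hc HK].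
  apply healthy_comp_same; [congruence | intros x; symmetry; apply HK].
Qed.

Lemma healthy_comp_extends (c c' : colouring V C) v :
  extends V C c c' -> dom V C c v ->
  healthy_comp V C c0 adj R c v -> healthy_comp V C c0 adj R c' v.
Proof.
  intros Hext Hdv; destruct (c v) as [k|] eqn:Hv; [|contradiction].
  assert (Hv' : c' v = Some k) by now apply Hext.
  assert (Hup : forall x, mono_comp V C adj c v x -> mono_comp V C adj c' v x)
    by eauto using mono_comp_extends.
  unfold healthy_comp; rewrite Hv, Hv'.
  intros [Hcol | [[r [Hr Hrv]] | [[Hfin Hnb] | [x [Hx [l [Hnd [Hlen Hl]]]]]]]].
  - now left.
  - right; left; eauto.
  - assert (Hdown : forall x, mono_comp V C adj c' v x -> mono_comp V C adj c v x).
    { intros x; rewrite (mono_comp_iff c' _ _ _ Hv'), (mono_comp_iff c _ _ _ Hv).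
      now apply mono_reach_extends_closed. }
    right; right; left; split.
    + destruct Hfin as [l Hl]; exists l; auto.
    + intros [y [u [Hy [Hyu Hu]]]]; apply Hnb; exists y, u; repeat split; auto.
      destruct (c u) as [ku|] eqn:Ecu; [|reflexivity].
      now rewrite (Hext _ _ Ecu) in Hu.
  - right; right; right; exists x; split; [auto|].
    exists l; repeat split; auto; [apply Hl | apply Hup, Hl]; auto.
Qed.

Lemma healthy_comp_of_new (c c' : colouring V C) v :
  finite_set V (fun x => dom V C c' x /\ ~ dom V C c x) ->
  (forall x, dom V C c' x -> ~ dom V C c x -> ~ vertex_symptom V C c0 adj R c' x) ->
  (forall x, mono_comp V C adj c' v x -> ~ dom V C c x) ->
  healthy_comp V C c0 adj R c' v.
Proof.
  intros [l Hl] Hnosym Hnew.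
  apply NNPP; intros Hunh.
  assert (Hopen : exists w u, mono_comp V C adj c' v w /\ adj w u /\ c' u = None).
  { apply NNPP; intros Hclosed; apply Hunh; right; right; left; split; [|exact Hclosed].
    exists l; intros x Hx; apply Hl; split; eauto using mono_comp_dom. }
  destruct Hopen as [w [u [Hw [Hwu Hu]]]].
  apply (Hnosym w); eauto using mono_comp_dom.
  repeat split; eauto using mono_comp_dom.
  - intros Hhw; apply Hunh, (healthy_comp_mono_comp c' w v); auto using mono_comp_sym.
  - intros Hr; apply Hunh; right; left; eauto.
Qed.

End MonochromaticComponents.

Theorem lemma3p2 (V : Type) (adj : V -> V -> Prop) (R : V -> Prop)
  (C : Type) (c0 : C) (c c' : colouring V C) :
  is_graph V adj ->
  healthy V C c0 adj R c ->
  extends V C c c' ->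
  finite_set V (fun v => dom V C c' v /\ ~ dom V C c v) ->
  (forall v, dom V C c' v -> ~ dom V C c v ->
     ~ vertex_symptom V C c0 adj R c' v) ->
  (forall K, component_symptom V C c0 adj R c' K ->
     ~ (forall w, K w -> dom V C c' w /\ ~ dom V C c w)) ->
  healthy V C c0 adj R c'.
Proof.
  (* No infinite component fits inside the finite set of new vertices. *)
  intros [Hsym _] Hhealthy Hext Hfin Hnosym _ v _.
  destruct (classic (exists w, mono_comp V C adj c' v w /\ dom V C c w))
    as [[w [Hvw Hw]] | Hnew].
  - apply (healthy_comp_mono_comp V C adj Hsym c0 R c' w v).
    + now apply mono_comp_sym.
    + apply healthy_comp_extends with c; auto.
  - apply healthy_comp_of_new with c; auto.
    intros x Hx Hdx; apply Hnew; eauto.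
Qed.
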